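(* Let $W$ be an sc-Banach space, $E=\mathbb R^n\oplus W$, $C=[0,\infty)^n\oplus W$, and let $N$ be a finite-dimensional subspace of $E$ in good position to $C$, with good complement $N^\perp$ and constant $c>0$ (as in the definition of good position). Let $\Sigma=\bigcup_{a\in C\cap N,\,a\ne0}\sigma_a\subset\{1,\dots,n\}$ and $\Sigma^c=\{1,\dots,n\}\setminus\Sigma$. Then $N^\perp\subset\mathbb R^{\Sigma^c}\oplus W$.
   Context: An sc-Banach space is a Banach space $W$ with nested Banach spaces $W=W_0\supset W_1\supset\cdots$, compact inclusions $W_n\to W_m$ ($m<n$), $\bigcap W_m$ dense in each $W_m$; $E$ has levels $\mathbb R^n\oplus W_m$ and $\|\cdot\|$ denotes its level-$0$ norm. For $a=(a_1,\dots,a_n,a_\infty)\in C$, $\sigma_a=\{i: a_i=0\}$. For $S\subset\{1,\dots,n\}$, $\mathbb R^S=\{x\in\mathbb R^n: x_j=0\text{ for all } j\notin S\}$. An sc-complement of $N$ is a closed subspace $N^\perp$ with $E_m=(N\cap E_m)\oplus(N^\perp\cap E_m)$ topologically for all $m$, both sc-subspaces. $N$ is in good position to $C$ if $N\cap C$ has nonempty interior in $N$ and there exist an sc-complement $N^\perp$ (a good complement) and $c>0$ such that for every $(n,m)\in N\oplus N^\perp$ with $\|m\|\le c\|n\|$: $n+m\in C$ iff $n\in C$. *)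

From HB Require Import structures.
From mathcomp Require Import all_boot all_order all_algebra.
From mathcomp Require Import all_classical all_reals all_analysis.
Set Implicit Arguments. Unset Strict Implicit. Unset Printing Implicit Defensive.
Import Order.TTheory GRing.Theory Num.Theory.
Import numFieldNormedType.Exports.
Local Open Scope classical_set_scope.
Local Open Scope ring_scope.

Definition lin_subspace (R : realType) (V : lmodType R) (S : set V) : Prop :=
  S 0 /\ forall (a : R) (x y : V), S x -> S y -> S (a *: x + y).

Definition cvg_nrm (R : realType) (V : zmodType) (nrm : V -> R)
  (u : nat -> V) (y : V) : Prop :=
  forall eps : R, 0 < eps -> exists N : nat, forall k, (N <= k)%N -> nrm (u k - y) < eps.

Definition cauchy_nrm (R : realType) (V : zmodType) (nrm : V -> R)
  (u : nat -> V) : Prop :=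
  forall eps : R, 0 < eps -> exists N : nat, forall k l, (N <= k)%N -> (N <= l)%N ->
    nrm (u k - u l) < eps.

Definition banach_on (R : realType) (V : lmodType R) (S : set V) (nrm : V -> R) : Prop :=
  lin_subspace S /\
  (forall x, S x -> 0 <= nrm x) /\
  (forall x, S x -> nrm x = 0 -> x = 0) /\
  (forall (a : R) x, S x -> nrm (a *: x) = `|a| * nrm x) /\
  (forall x y, S x -> S y -> nrm (x + y) <= nrm x + nrm y) /\
  (forall u : nat -> V, (forall k, S (u k)) -> cauchy_nrm nrm u ->
     exists2 y, S y & cvg_nrm nrm u y).

(* An sc-structure on the normed space W: nested levels W = W_0 ⊃ W_1 ⊃ ...,
   level m carried by the set lvl m with Banach norm nrm m, the level-0 norm
   being the norm of W; compact inclusions W_k -> W_m (m < k); W_oo dense in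
   every W_m. *)
Definition sc_banach (R : realType) (W : normedModType R)
  (lvl : nat -> set W) (nrm : nat -> W -> R) : Prop :=
  lvl 0%N = setT /\ nrm 0%N = (fun w => `|w|) /\
  (forall m, lvl m.+1 `<=` lvl m) /\
  (forall m, banach_on (lvl m) (nrm m)) /\
  (forall m k, (m < k)%N -> forall u : nat -> W, (forall j, lvl k (u j)) ->
     (exists B : R, forall j, nrm k (u j) <= B) ->
     exists phi : nat -> nat, (forall j, (phi j < phi j.+1)%N) /\
       exists2 y, lvl m y & cvg_nrm (nrm m) (u \o phi) y) /\
  (forall m x (eps : R), lvl m x -> 0 < eps ->
     exists2 y, (forall k, lvl k y) & nrm m (x - y) < eps).

Definition Espace (R : realType) (n : nat) (W : normedModType R) : Type :=
  ('rV[R]_n * W)%type.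

Definition Elvl (R : realType) (n : nat) (W : normedModType R)
  (lvl : nat -> set W) (m : nat) : set ('rV[R]_n * W) :=
  [set e | lvl m e.2].

(* level-m norm on E: max of the (max-)norm on R^n and the level-m norm on W;
   at level 0 this is the product norm of 'rV[R]_n * W. *)
Definition Enrm (R : realType) (n : nat) (W : normedModType R)
  (nrm : nat -> W -> R) (m : nat) (e : 'rV[R]_n * W) : R :=
  Num.max `|e.1| (nrm m e.2).

Definition Cquad (R : realType) (n : nat) (W : normedModType R) : set ('rV[R]_n * W) :=
  [set e : 'rV[R]_n * W | forall i : 'I_n, 0 <= e.1 ord0 i].

Definition sigma_of (R : realType) (n : nat) (W : normedModType R)
  (a : 'rV[R]_n * W) : set 'I_n :=
  [set i : 'I_n | a.1 ord0 i = 0].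

Definition Rsub (R : realType) (n : nat) (S : set 'I_n) : set 'rV[R]_n :=
  [set x : 'rV[R]_n | forall j : 'I_n, ~ S j -> x ord0 j = 0].

Definition span_of (R : realType) (V : lmodType R) (s : seq V) : set V :=
  [set v | exists c : 'I_(size s) -> R, v = \sum_(i < size s) c i *: s`_i].

Definition fin_dim_subspace (R : realType) (V : lmodType R) (N : set V) : Prop :=
  exists s : seq V, N = span_of s.

Definition sc_subspace (R : realType) (n : nat) (W : normedModType R)
  (lvl : nat -> set W) (nrm : nat -> W -> R) (F : set ('rV[R]_n * W)) : Prop :=
  lin_subspace F /\
  (forall m (u : nat -> 'rV[R]_n * W) y, (forall k, F (u k) /\ Elvl lvl m (u k)) ->
     Elvl lvl m y -> cvg_nrm (Enrm nrm m) u y -> F y) /\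
  (forall m x (eps : R), F x -> Elvl lvl m x -> 0 < eps ->
     exists2 y, F y /\ (forall k, Elvl lvl k y) & Enrm nrm m (x - y) < eps).

(* Nperp is an sc-complement of N: a closed subspace (closedness at level 0 is
   part of sc_subspace) such that E_m = (N ∩ E_m) ⊕ (Nperp ∩ E_m) topologically
   for all m (unique decomposition with bounded projection), N and Nperp being
   sc-subspaces. *)
Definition sc_complement (R : realType) (n : nat) (W : normedModType R)
  (lvl : nat -> set W) (nrm : nat -> W -> R) (N Nperp : set ('rV[R]_n * W)) : Prop :=
  sc_subspace lvl nrm N /\ sc_subspace lvl nrm Nperp /\
  forall m,
    (forall e, Elvl lvl m e -> exists x y,
        [/\ N x, Elvl lvl m x, Nperp y, Elvl lvl m y & e = x + y]) /\
    (forall e, N e -> Nperp e -> Elvl lvl m e -> e = 0) /\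
    (exists K : R, forall x y, N x -> Elvl lvl m x -> Nperp y -> Elvl lvl m y ->
        Enrm nrm m x <= K * Enrm nrm m (x + y)).

Definition nonempty_interior_in (R : realType) (n : nat) (W : normedModType R)
  (nrm : nat -> W -> R) (N C : set ('rV[R]_n * W)) : Prop :=
  exists a, N a /\ C a /\ exists2 r : R, 0 < r &
    forall b, N b -> Enrm nrm 0 (b - a) < r -> C b.

Definition good_complement (R : realType) (n : nat) (W : normedModType R)
  (lvl : nat -> set W) (nrm : nat -> W -> R) (C N Nperp : set ('rV[R]_n * W))
  (c : R) : Prop :=
  sc_complement lvl nrm N Nperp /\ 0 < c /\
  forall x y, N x -> Nperp y -> Enrm nrm 0 y <= c * Enrm nrm 0 x ->
    (C (x + y) <-> C x).

Definition good_position_with (R : realType) (n : nat) (W : normedModType R)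
  (lvl : nat -> set W) (nrm : nat -> W -> R) (C N Nperp : set ('rV[R]_n * W))
  (c : R) : Prop :=
  nonempty_interior_in nrm N (C `&` N) /\ good_complement lvl nrm C N Nperp c.

(** Suppose [a] lies in [C ∩ N], [a <> 0], [a_j = 0], and [e] lies in [N^perp]
    with [e_j <> 0].  Choose [t] with [t e_j < 0] and [|t| ‖e‖ <= c ‖a‖].  Good
    position says [a + t e] lies in [C] because [a] does, yet the [j]-th
    coordinate of [a + t e] is [t e_j < 0]. *)

From HB Require Import structures.
From mathcomp Require Import all_boot all_order all_algebra.
From mathcomp Require Import all_classical all_reals all_analysis.
Set Implicit Arguments. Unset Strict Implicit. Unset Printing Implicit Defensive.
Import Order.TTheory GRing.Theory Num.Theory.
Import numFieldNormedType.Exports.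
Local Open Scope classical_set_scope.
Local Open Scope ring_scope.

Lemma lin_subspaceZ (R : realType) (V : lmodType R) (S : set V) (a : R) (x : V) :
  lin_subspace S -> S x -> S (a *: x).
Proof. by move=> [S0 SD] Sx; rewrite -[a *: x]addr0; apply: SD. Qed.

Lemma exists_small_opposite_sign (R : realFieldType) (x M B : R) :
  x != 0 -> 0 <= M -> 0 < B -> exists2 t : R, `|t| * M <= B & t * x < 0.
Proof.
move=> x0 M0 B0; have M1 : 0 < M + 1 by rewrite ltr_wpDl.
exists (- (B / (M + 1)) * Num.sg x).
- rewrite normrM normrN normr_sg x0 mulr1 gtr0_norm ?divr_gt0 //.
  by rewrite mulrAC ler_pdivrMr // ler_pM2l // lerDl.
- by rewrite -mulrA -normrEsg mulNr oppr_lt0 mulr_gt0 ?divr_gt0 ?normr_gt0.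
Qed.

Section LevelZeroNorm.
Variables (R : realType) (n : nat) (W : normedModType R) (nrm : nat -> W -> R).
Hypothesis nrm0 : nrm 0%N = (fun w => `|w|).

Lemma Enrm0_ge0 (e : 'rV[R]_n * W) : 0 <= Enrm nrm 0 e.
Proof. by rewrite /Enrm nrm0 le_max normr_ge0. Qed.

Lemma Enrm0_gt0 (e : 'rV[R]_n * W) : e != 0 -> 0 < Enrm nrm 0 e.
Proof.
case: e => e1 e2 e0; rewrite /Enrm nrm0 lt_max !normr_gt0 /=.
by apply: contraNT e0; rewrite negb_or !negbK => /andP[/eqP-> /eqP->].
Qed.

Lemma Enrm0Z (t : R) (e : 'rV[R]_n * W) :
  Enrm nrm 0 (t *: e) = `|t| * Enrm nrm 0 e.
Proof. by rewrite /Enrm nrm0 /= !normrZ -maxr_pMr ?normr_ge0. Qed.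

Lemma good_complement_Cquad_coord_eq0 (lvl : nat -> set W)
    (N Nperp : set ('rV[R]_n * W)) (c : R) (a e : 'rV[R]_n * W) (j : 'I_n) :
  good_complement lvl nrm (@Cquad R n W) N Nperp c ->
  Cquad a -> N a -> a != 0 -> a.1 ord0 j = 0 -> Nperp e -> e.1 ord0 j = 0.
Proof.
move=> [[_ [[Nperp_lin _] _]] [c0 good]] Ca Na a0 aj0 Ne.
apply/eqP; apply: contraT => ej0.
have [t te_small te_neg] := exists_small_opposite_sign ej0 (Enrm0_ge0 e)
    (mulr_gt0 c0 (Enrm0_gt0 a0)).
have Nte : Nperp (t *: e) by apply: lin_subspaceZ.
have /(good a _ Na Nte) Cate : Enrm nrm 0 (t *: e) <= c * Enrm nrm 0 a.
  by rewrite Enrm0Z.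
by have := Cate.2 Ca j; rewrite !mxE aj0 add0r leNgt te_neg.
Qed.

End LevelZeroNorm.

Theorem lemma6p6 (R : realType) (n : nat) (W : normedModType R)
  (lvl : nat -> set W) (nrm : nat -> W -> R)
  (N Nperp : set ('rV[R]_n * W)) (c : R) :
  sc_banach lvl nrm ->
  fin_dim_subspace N ->
  good_position_with lvl nrm (@Cquad R n W) N Nperp c ->
  let Sigma : set 'I_n :=
    [set i | exists a, (@Cquad R n W `&` N) a /\ a <> 0 /\ sigma_of a i] in
  Nperp `<=` [set e | Rsub (~` Sigma) e.1].
Proof.
move=> [_ [nrm0 _]] _ [_ good] Sigma e Ne j /= /contrapT[a [[Ca Na] [a0 aj0]]].
exact: (good_complement_Cquad_coord_eq0 nrm0 good Ca Na (introN eqP a0) aj0 Ne).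
Qed.
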